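(* Let $\mu>0$, $\tau>0$, $\kappa>0$, $n\in\mathbb N$ be fixed and let $\Delta(\lambda,\alpha)=1-(1-\ln\alpha)e^{-\lambda\tau}(1+\frac{\lambda}{\mu+\kappa})^{-n-1}$. For $k\in\mathbb N$ let $\omega_k>0$ be the unique solution of $\omega\tau+(n+1)\arctan\frac{\omega}{\mu+\kappa}=\pi+2k\pi$ and $\alpha_k=\exp\big(1+(1+\omega_k^2/(\mu+\kappa)^2)^{(n+1)/2}\big)$, so that $\Delta(\pm i\omega_k,\alpha_k)=0$. Then for each $k\ge0$ there exist $\rho_k>0$ and a $C^1$ map $\hat\lambda_k:(\alpha_k-\rho_k,\alpha_k+\rho_k)\to\mathbb C$ such that $\hat\lambda_k(\alpha_k)=i\omega_k$, $\Delta(\hat\lambda_k(\alpha),\alpha)=0$ for all $\alpha\in(\alpha_k-\rho_k,\alpha_k+\rho_k)$, and $$\operatorname{Re}\frac{d\hat\lambda_k}{d\alpha}(\alpha_k)>0.$$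
   Context: $\Delta$ is the characteristic function of the linearization at $\bar u(a)=\ln(\alpha)e^{-\mu a}$ of $\partial_tu+\partial_au=-\mu u$, $u(t,0)=\alpha f(\int_0^\infty\beta(a)u(t,a)\,da)$, $f(x)=xe^{-x}$, with $\beta(a)=C_0(a-\tau)^ne^{-\kappa(a-\tau)}\mathbf 1_{[\tau,\infty)}(a)$ normalized by $\int_0^\infty\beta(a)e^{-\mu a}da=1$. *)

From Stdlib Require Import Reals.
From Coquelicot Require Import Coquelicot.
Open Scope C_scope.

Definition Cexp (z : C) : C :=
  (exp (Re z) * cos (Im z), exp (Re z) * sin (Im z))%R.

Definition charDelta (mu tau kappa : R) (n : nat) (lam : C) (alpha : R) : C :=
  1 - RtoC (1 - ln alpha) * Cexp (- lam * RtoC tau)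
      * / Cpow (1 + lam / RtoC (mu + kappa)) (S n).

Definition alpha_of (mu kappa : R) (n : nat) (omega : R) : R :=
  exp (1 + Rpower (1 + omega ^ 2 / (mu + kappa) ^ 2) (INR (S n) / 2)).

From Stdlib Require Import Reals Lra Lia ClassicalEpsilon Ranalysis5.
From Coquelicot Require Import Coquelicot.
Open Scope R_scope.

(* Write a root as λ = x + iy and 1 + λ/(μ+κ) = r e^{iθ}.  Comparing arguments in
   Δ(λ, α) = 0 gives (n+1)θ = π + 2kπ − τy on the branch through iω_k, so θ,
   r = y / ((μ+κ) sin θ) and x = y cot θ − (μ+κ) are explicit functions of y;
   comparing moduli then gives ln(ln α − 1) = (n+1) ln r + τx, i.e. α is an explicit
   function α(y).  At y = ω_k one has θ = arctan(ω_k/(μ+κ)) ∈ (0, π/2), x = 0 and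
   α(ω_k) = α_k.  While θ stays in (0, π/2), both x and α are strictly increasing in y,
   so α(y) has a differentiable local inverse y(α), the branch is
   λ̂(α) = x(y(α)) + i y(α), and Re λ̂'(α_k) = x'(ω_k) / α'(ω_k) > 0. *)

Section IntervalInverse.

Variables (f df : R -> R) (a b : R).
Hypothesis Hab : a < b.
Hypothesis Hdf : forall y, a <= y <= b -> is_derive f y (df y) /\ 0 < df y.

Definition interval_inverse (t : R) : R :=
  epsilon (inhabits 0) (fun y => a <= y <= b /\ f y = t).

Local Notation g := interval_inverse.

Lemma interval_increasing x y : a <= x -> x < y -> y <= b -> f x < f y.
Proof.
apply (incr_function_le f a b df); intros z Hz1 Hz2; apply Hdf; simpl in *; lra.
Qed.

Lemma interval_continuous y : a <= y <= b -> continuity_pt f y.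
Proof.
intros Hy; apply continuity_pt_filterlim, (ex_derive_continuous f).
exists (df y); apply Hdf, Hy.
Qed.

Lemma interval_inverse_spec t : f a <= t <= f b -> a <= g t <= b /\ f (g t) = t.
Proof.
intros Ht; unfold interval_inverse; apply epsilon_spec.
destruct (f_interv_is_interv f a b t Hab Ht interval_continuous) as [y Hy].
now exists y.
Qed.

Lemma interval_inverse_cancel y : a <= y <= b -> g (f y) = y.
Proof.
intros Hy.
assert (Hfy : f a <= f y <= f b).
{ split; destruct (Req_dec y a), (Req_dec y b); subst; try lra;
    apply Rlt_le, interval_increasing; lra. }
destruct (interval_inverse_spec (f y) Hfy) as [Hgy Hfgy].
destruct (Rtotal_order (g (f y)) y) as [Hlt | [Heq | Hgt]]; [| exact Heq |].
- pose proof (interval_increasing _ _ (proj1 Hgy) Hlt (proj2 Hy)); lra.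
- pose proof (interval_increasing _ _ (proj1 Hy) Hgt (proj2 Hgy)); lra.
Qed.

Lemma is_derive_interval_inverse t : f a < t < f b -> is_derive g t (/ df (g t)).
Proof.
intros Ht.
assert (Hfab : f a < f b) by (apply interval_increasing; lra).
assert (Hfg : forall s, f a <= s <= f b -> comp f g s = id s)
  by (intros s Hs; apply interval_inverse_spec, Hs).
assert (Hcont : continuity_pt g t).
{ apply (continuity_pt_recip_interv f g a b Hab interval_increasing);
    try (intros; apply interval_inverse_spec); auto using interval_continuous; lra. }
assert (Prf : forall y, g (f a) <= y <= g (f b) -> derivable_pt f y).
{ intros y Hy; rewrite !interval_inverse_cancel in Hy by lra.
  exists (df y); apply is_derive_Reals, Hdf, Hy. }
assert (Hgt : g (f a) <= g t <= g (f b)).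
{ rewrite !interval_inverse_cancel by lra; apply interval_inverse_spec; lra. }
destruct (interval_inverse_spec t ltac:(lra)) as [Hgt_ab _].
assert (Hd : derive_pt f (g t) (Prf (g t) Hgt) = df (g t)).
{ apply derive_pt_eq_0, is_derive_Reals, Hdf, Hgt_ab. }
assert (Hpos : 0 < df (g t)) by apply Hdf, Hgt_ab.
pose proof (derivable_pt_lim_recip_interv f g (f a) (f b) t Prf Hcont Hfab Ht Hgt
  Hfg ltac:(rewrite Hd; lra)) as Hlim.
rewrite Hd in Hlim.
apply is_derive_Reals; replace (/ df (g t)) with (1 / df (g t)) by (field; lra).
exact Hlim.
Qed.

End IntervalInverse.

Lemma local_inverse (f df : R -> R) (P : R -> Prop) (y0 : R) :
  locally y0 P ->
  (forall y, P y -> is_derive f y (df y) /\ 0 < df y) ->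
  exists (rho : R) (g : R -> R), 0 < rho /\ g (f y0) = y0 /\
    forall t, f y0 - rho < t < f y0 + rho ->
      P (g t) /\ f (g t) = t /\ is_derive g t (/ df (g t)).
Proof.
intros [eps Heps] Hdf.
set (a := y0 - eps / 2); set (b := y0 + eps / 2).
assert (Heps2 : 0 < eps / 2) by (pose proof (cond_pos eps); lra).
assert (HP : forall y, a <= y <= b -> P y).
{ intros y Hy; apply Heps; change (Rabs (y - y0) < eps).
  unfold a, b in Hy; apply Rabs_def1; lra. }
assert (Hdab : forall y, a <= y <= b -> is_derive f y (df y) /\ 0 < df y)
  by (intros y Hy; apply Hdf, HP, Hy).
assert (Hab : a < b) by (unfold a, b; lra).
assert (Hfa : f a < f y0) by (apply (interval_increasing f df a b); unfold a, b in *; auto; lra).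
assert (Hfb : f y0 < f b) by (apply (interval_increasing f df a b); unfold a, b in *; auto; lra).
exists (Rmin (f y0 - f a) (f b - f y0)), (interval_inverse f a b).
split; [apply Rmin_glb_lt; lra | split].
- apply (interval_inverse_cancel f df a b Hab Hdab); unfold a, b; lra.
- intros t Ht.
  pose proof (Rmin_l (f y0 - f a) (f b - f y0)); pose proof (Rmin_r (f y0 - f a) (f b - f y0)).
  destruct (interval_inverse_spec f df a b Hab Hdab t ltac:(lra)) as [Hg Hfg].
  split; [now apply HP | split; [exact Hfg |]].
  apply (is_derive_interval_inverse f df a b Hab Hdab); lra.
Qed.

Lemma pair_basis (u v : R) : (u, v) = plus (scal u ((1, 0) : R * R)) (scal v ((0, 1) : R * R)).
Proof.
apply injective_projections; simpl; unfold plus, scal; simpl; unfold mult, plus; simpl; ring.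
Qed.

Lemma is_derive_pair (f g : R -> R) (x df dg : R) :
  is_derive f x df -> is_derive g x dg -> is_derive (fun t => (f t, g t)) x (df, dg).
Proof.
intros Hf Hg.
apply (is_derive_ext (fun t => plus (scal (f t) ((1, 0) : R * R)) (scal (g t) ((0, 1) : R * R)))).
{ intros t; symmetry; apply pair_basis. }
rewrite (pair_basis df dg).
apply (is_derive_plus (V := prod_NormedModule R_AbsRing R_NormedModule R_NormedModule));
  apply (is_derive_scal_l (V := prod_NormedModule R_AbsRing R_NormedModule R_NormedModule));
  assumption.
Qed.

Lemma continuous_pair (f g : R -> R) (x : R) :
  continuous f x -> continuous g x -> continuous (fun t => (f t, g t)) x.
Proof.
intros Hf Hg; apply (continuous_comp_2 f g pair x Hf Hg).
apply (continuous_ext (fun u : R * R => u)); [now intros [] | apply continuous_id].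
Qed.

Lemma locally_pos (f : R -> R) (x : R) :
  continuous f x -> 0 < f x -> locally x (fun y => 0 < f y).
Proof. intros Hf Hx; exact (Hf _ (open_gt 0 (f x) Hx)). Qed.

Lemma Cexp_neg_mul_RtoC (x y t : R) :
  Cexp (- (x, y) * RtoC t)%C = (exp (- (x * t)) * cos (y * t), - (exp (- (x * t)) * sin (y * t))).
Proof.
unfold Cexp; replace (- (x, y) * RtoC t)%C with ((- (x * t), - (y * t)) : C)
  by (apply injective_projections; simpl; ring).
apply injective_projections; simpl; rewrite ?cos_neg, ?sin_neg; ring.
Qed.

Lemma Cpow_polar (r t : R) (m : nat) :
  Cpow (r * cos t, r * sin t) m = (r ^ m * cos (INR m * t), r ^ m * sin (INR m * t)).
Proof.
induction m as [| m IHm].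
- simpl; rewrite Rmult_0_l, cos_0, sin_0; apply injective_projections; simpl; ring.
- rewrite Cpow_S, IHm, S_INR, Rmult_plus_distr_r, Rmult_1_l, (Rplus_comm _ t), cos_plus, sin_plus.
  apply injective_projections; simpl; ring.
Qed.

Lemma Cplus_1_div_RtoC (x y d : R) : d <> 0 -> (1 + (x, y) / RtoC d)%C = (1 + x / d, y / d).
Proof. intros Hd; apply injective_projections; simpl; field; assumption. Qed.

Section RootCurve.

Variables (c tau A N : R).
Hypothesis Hc : 0 < c.
Hypothesis HN : 0 < N.
Hypothesis Htau : 0 < tau.

(* [c], [A] and [N] stand for μ + κ, π + 2kπ and n + 1.  Along the branch, [root_arg y] is θ,
   [root_re y] is x, [root_gain y] is ln(ln α − 1) and [root_alpha y] is α(y); primed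
   names are derivatives in y, [root_velocity y] is dλ/dα, and [first_quadrant y]
   says that 1 + λ/c lies in the open first quadrant. *)
Definition root_arg (y : R) : R := (A - tau * y) / N.

Definition root_re (y : R) : R := y * cos (root_arg y) / sin (root_arg y) - c.

Definition root_re' (y : R) : R :=
  cos (root_arg y) / sin (root_arg y)
  + y * tau / N * (1 + (cos (root_arg y) / sin (root_arg y)) ^ 2).

Definition root_gain (y : R) : R :=
  N * ln (y / (c * sin (root_arg y))) + tau * root_re y.

Definition root_gain' (y : R) : R :=
  N / y + tau * (cos (root_arg y) / sin (root_arg y)) + tau * root_re' y.

Definition root_alpha (y : R) : R := exp (1 + exp (root_gain y)).

Definition root_alpha' (y : R) : R := root_alpha y * exp (root_gain y) * root_gain' y.

Definition root_curve (y : R) : C := (root_re y, y).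

Definition root_velocity (y : R) : C := scal (/ root_alpha' y) ((root_re' y, 1) : C).

Definition first_quadrant (y : R) : Prop :=
  0 < y /\ 0 < sin (root_arg y) /\ 0 < cos (root_arg y).

Lemma is_derive_root_arg y : is_derive root_arg y (- tau / N).
Proof. unfold root_arg; auto_derive; [easy | field; lra]. Qed.

Lemma ex_derive_root_arg y : ex_derive root_arg y.
Proof. eexists; apply is_derive_root_arg. Qed.

Lemma Derive_root_arg y : Derive (fun x => root_arg x) y = - tau / N.
Proof. apply is_derive_unique, is_derive_root_arg. Qed.

Lemma is_derive_root_re y : 0 < sin (root_arg y) -> is_derive root_re y (root_re' y).
Proof.
intros Hs; unfold root_re, root_re'.
auto_derive; [repeat split; auto using ex_derive_root_arg; lra |].
rewrite Derive_root_arg; field; lra.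
Qed.

Lemma is_derive_root_gain y :
  0 < y -> 0 < sin (root_arg y) -> is_derive root_gain y (root_gain' y).
Proof.
intros Hy Hs; unfold root_gain, root_gain', root_re, root_re'.
auto_derive.
- assert (0 < c * sin (root_arg y)) by (apply Rmult_lt_0_compat; lra).
  repeat split; auto using ex_derive_root_arg; try lra.
  apply Rmult_lt_0_compat; [lra | now apply Rinv_0_lt_compat].
- rewrite Derive_root_arg; field; repeat split; lra.
Qed.

Lemma ex_derive_root_gain y : 0 < y -> 0 < sin (root_arg y) -> ex_derive root_gain y.
Proof. intros Hy Hs; eexists; apply is_derive_root_gain; assumption. Qed.

Lemma is_derive_root_alpha y :
  0 < y -> 0 < sin (root_arg y) -> is_derive root_alpha y (root_alpha' y).
Proof.
intros Hy Hs; unfold root_alpha, root_alpha'.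
auto_derive; [now apply ex_derive_root_gain |].
replace (Derive (fun x => root_gain x) y) with (root_gain' y)
  by (symmetry; apply is_derive_unique, is_derive_root_gain; assumption).
unfold root_alpha; ring.
Qed.

Lemma is_derive_root_curve y :
  0 < sin (root_arg y) -> is_derive root_curve y ((root_re' y, 1) : C).
Proof. intros Hs; apply is_derive_pair; [now apply is_derive_root_re | now auto_derive]. Qed.

Lemma root_re'_pos y : first_quadrant y -> 0 < root_re' y.
Proof.
intros (Hy & Hs & Hco); unfold root_re'.
assert (0 < cos (root_arg y) / sin (root_arg y)) by (apply Rdiv_lt_0_compat; lra).
assert (0 < y * tau / N) by (apply Rdiv_lt_0_compat; nra).
pose proof (pow2_ge_0 (cos (root_arg y) / sin (root_arg y))).
apply Rplus_lt_0_compat; [assumption | apply Rmult_lt_0_compat; lra].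
Qed.

Lemma root_alpha'_pos y : first_quadrant y -> 0 < root_alpha' y.
Proof.
intros Hq; pose proof (root_re'_pos y Hq); destruct Hq as (Hy & Hs & Hco).
assert (0 < cos (root_arg y) / sin (root_arg y)) by (apply Rdiv_lt_0_compat; lra).
assert (0 < root_gain' y).
{ unfold root_gain'; repeat apply Rplus_lt_0_compat;
    auto using Rmult_lt_0_compat; apply Rdiv_lt_0_compat; lra. }
unfold root_alpha', root_alpha; repeat apply Rmult_lt_0_compat; auto using exp_pos.
Qed.

Lemma continuous_root_re' y : 0 < sin (root_arg y) -> continuous root_re' y.
Proof.
intros Hs; apply (ex_derive_continuous root_re'); unfold root_re'.
auto_derive; repeat split; auto using ex_derive_root_arg; lra.
Qed.

Lemma continuous_root_alpha' y : 0 < y -> 0 < sin (root_arg y) -> continuous root_alpha' y.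
Proof.
intros Hy Hs; apply (ex_derive_continuous root_alpha');
  unfold root_alpha', root_alpha, root_gain', root_re'.
auto_derive; repeat split; auto using ex_derive_root_arg, ex_derive_root_gain; lra.
Qed.

Lemma continuous_root_velocity y : first_quadrant y -> continuous root_velocity y.
Proof.
intros Hq; pose proof (root_alpha'_pos y Hq); destruct Hq as (Hy & Hs & _).
apply (continuous_scal (V := prod_NormedModule R_AbsRing R_NormedModule R_NormedModule)).
- apply continuous_Rinv_comp; [now apply continuous_root_alpha' | lra].
- apply continuous_pair; [now apply continuous_root_re' | apply continuous_const].
Qed.

Lemma root_velocity_re_pos y : first_quadrant y -> 0 < Re (root_velocity y).
Proof.
intros Hq; apply Rmult_lt_0_compat.
- apply Rinv_0_lt_compat, root_alpha'_pos, Hq.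
- apply root_re'_pos, Hq.
Qed.

Lemma locally_first_quadrant y : first_quadrant y -> locally y first_quadrant.
Proof.
intros (Hy & Hs & Hco); unfold first_quadrant; repeat apply filter_and.
- now apply (locally_pos (fun x => x)); [apply continuous_id |].
- apply (locally_pos (fun x => sin (root_arg x))); [| exact Hs].
  apply (ex_derive_continuous (fun x => sin (root_arg x))).
  auto_derive; auto using ex_derive_root_arg.
- apply (locally_pos (fun x => cos (root_arg x))); [| exact Hco].
  apply (ex_derive_continuous (fun x => cos (root_arg x))).
  auto_derive; auto using ex_derive_root_arg.
Qed.

End RootCurve.

Section CharacteristicRoots.

Variables (mu tau kappa : R) (n k : nat).
Hypothesis Hc : 0 < mu + kappa.

Local Notation c := (mu + kappa).
Local Notation A := (PI + 2 * INR k * PI).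
Local Notation N := (INR (S n)).

Lemma charDelta_root_curve y a :
  0 < y -> 0 < sin (root_arg tau A N y) -> root_alpha c tau A N y = a ->
  charDelta mu tau kappa n (root_curve c tau A N y) a = 0.
Proof.
intros Hy Hs <-.
assert (HN : 0 < N) by (apply lt_0_INR; lia).
set (th := root_arg tau A N y) in *.
set (X := root_re c tau A N y).
set (r := y / (c * sin th)).
assert (Hr : 0 < r) by (apply Rdiv_lt_0_compat; [| apply Rmult_lt_0_compat]; lra).
assert (Hbase : (1 + root_curve c tau A N y / RtoC c)%C = (r * cos th, r * sin th)).
{ unfold root_curve; rewrite Cplus_1_div_RtoC by lra; fold X.
  unfold X, root_re, r; fold th; f_equal; field; lra. }
assert (Hcoef : 1 - ln (root_alpha c tau A N y) = - (r ^ S n * exp (tau * X))).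
{ unfold root_alpha, root_gain; rewrite ln_exp; fold th r X.
  rewrite exp_plus, <- (Rpower_pow (S n) r Hr); unfold Rpower; ring. }
assert (Harg : N * th = PI - tau * y + 2 * INR k * PI)
  by (unfold th, root_arg; field; lra).
assert (Hpow : (RtoC (1 - ln (root_alpha c tau A N y)) * Cexp (- root_curve c tau A N y * RtoC tau))%C
               = Cpow (r * cos th, r * sin th) (S n)).
{ rewrite Hcoef; unfold root_curve; fold X; rewrite Cexp_neg_mul_RtoC, Cpow_polar, Harg.
  rewrite cos_period, sin_period, cos_minus, sin_minus, cos_PI, sin_PI, exp_Ropp.
  pose proof (exp_pos (X * tau)).
  replace (tau * X) with (X * tau) by ring; replace (tau * y) with (y * tau) by ring.
  apply injective_projections; simpl; field; lra. }
assert (Hnz : (r * cos th, r * sin th) <> RtoC 0).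
{ intros E; apply (f_equal snd) in E; simpl in E.
  pose proof (Rmult_lt_0_compat r (sin th) Hr Hs); lra. }
unfold charDelta; rewrite Hbase, Hpow, Cinv_r by (apply Cpow_nz, Hnz).
apply injective_projections; simpl; ring.
Qed.

Section AtOmega.

Variable omega : R.
Hypothesis Homega : 0 < omega.
Hypothesis Hk : omega * tau + N * atan (omega / c) = A.

Lemma root_arg_omega : root_arg tau A N omega = atan (omega / c).
Proof.
assert (HN : 0 < N) by (apply lt_0_INR; lia).
unfold root_arg; rewrite <- Hk; field; lra.
Qed.

Let ratio_pos : 0 < omega / c.
Proof. apply Rdiv_lt_0_compat; assumption. Qed.

Let ratio_norm_pos : 0 < sqrt (1 + (omega / c)²).
Proof. apply sqrt_lt_R0; pose proof (Rle_0_sqr (omega / c)); lra. Qed.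

Lemma first_quadrant_omega : first_quadrant tau A N omega.
Proof.
unfold first_quadrant; rewrite root_arg_omega, sin_atan, cos_atan.
split; [exact Homega | split; apply Rdiv_lt_0_compat; lra].
Qed.

Lemma root_re_omega : root_re c tau A N omega = 0.
Proof.
unfold root_re; rewrite root_arg_omega, sin_atan, cos_atan; field; lra.
Qed.

Lemma root_alpha_omega : root_alpha c tau A N omega = alpha_of mu kappa n omega.
Proof.
unfold root_alpha, root_gain, alpha_of, Rpower; rewrite root_re_omega, root_arg_omega, sin_atan.
replace (omega / (c * (omega / c / sqrt (1 + (omega / c)²)))) with (sqrt (1 + (omega / c)²))
  by (field; lra).
rewrite <- Rpower_sqrt by (pose proof (Rle_0_sqr (omega / c)); lra).
unfold Rpower; rewrite ln_exp.
replace (1 + (omega / c)²) with (1 + omega ^ 2 / c ^ 2) by (unfold Rsqr; field; lra).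
do 3 f_equal; lra.
Qed.

End AtOmega.

End CharacteristicRoots.

Theorem theorem7p3 (mu tau kappa : R) (n k : nat) (omega : R) :
  (0 < mu)%R -> (0 < tau)%R -> (0 < kappa)%R ->
  (0 < omega)%R ->
  (omega * tau + INR (S n) * atan (omega / (mu + kappa)) = PI + 2 * INR k * PI)%R ->
  let alpha := alpha_of mu kappa n omega in
  exists (rho : R) (lam lam' : R -> C),
    (0 < rho)%R /\
    (forall a : R, (alpha - rho < a < alpha + rho)%R ->
       is_derive lam a (lam' a) /\ continuous lam' a) /\
    lam alpha = (0, omega)%R /\
    (forall a : R, (alpha - rho < a < alpha + rho)%R ->
       charDelta mu tau kappa n (lam a) a = 0) /\
    (0 < Re (lam' alpha))%R.
Proof.
intros Hmu Htau Hkap Homega Hk alpha.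
assert (Hc : 0 < mu + kappa) by lra.
assert (HN : 0 < INR (S n)) by (apply lt_0_INR; lia).
set (c := mu + kappa) in Hc, Hk; set (A := PI + 2 * INR k * PI) in Hk; set (N := INR (S n)) in HN, Hk.
assert (Halpha : root_alpha c tau A N omega = alpha) by now apply root_alpha_omega.
destruct (local_inverse (root_alpha c tau A N) (root_alpha' c tau A N) (first_quadrant tau A N) omega)
  as (rho & g & Hrho & Hg_omega & Hg).
{ now apply locally_first_quadrant, (first_quadrant_omega mu tau kappa n k). }
{ intros y Hy; split; [apply is_derive_root_alpha; try apply Hy; assumption |].
  now apply root_alpha'_pos. }
rewrite Halpha in Hg_omega, Hg.
exists rho, (fun a => root_curve c tau A N (g a)), (fun a => root_velocity c tau A N (g a)).
split; [exact Hrho | split; [| split; [| split]]].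
- intros a Ha; destruct (Hg a Ha) as (Hqa & _ & Hda); split.
  + exact (is_derive_comp _ g a _ _ (is_derive_root_curve _ _ _ _ HN _ (proj1 (proj2 Hqa))) Hda).
  + apply (continuous_comp g); [apply (ex_derive_continuous g); eexists; exact Hda |].
    now apply continuous_root_velocity.
- unfold root_curve; rewrite Hg_omega; f_equal.
  now apply (root_re_omega mu tau kappa n k).
- intros a Ha; destruct (Hg a Ha) as ((Hy & Hs & _) & Hfg & _).
  now apply (charDelta_root_curve mu tau kappa n k Hc (g a) a).
- rewrite Hg_omega; now apply root_velocity_re_pos, (first_quadrant_omega mu tau kappa n k).
Qed.
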